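(* Let $a\in S^1$ with $a\notin\{0,\tfrac12,\tfrac14,-\tfrac14\}$ and let $W=\{0,a,\tfrac12,a+\tfrac12\}$. Then $P(W)$ holds.
   Context: Identify $S^1$ with $\mathbb{R}/\mathbb{Z}$. The group $O(2)$ acts on $S^1$ by translations $x\mapsto x+a$ and reflections $x\mapsto -x+2a$. A coloring $c:S^1\to\{R,B\}$ is distinguishing if no non-identity $\gamma\in O(2)$ satisfies $c\circ\gamma=c$. For $W\subset S^1$ with trivial pointwise stabilizer in $O(2)$, $P(W)$ holds if every precoloring $c:S^1\setminus W\to\{R,B\}$ extends to a distinguishing coloring of $S^1$. *)

(* the circle S^1 = R/Z is modelled by real representatives,
   objects on S^1 by 1-periodic functions on R. *)
From Stdlib Require Import Reals.
Open Scope R_scope.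

Inductive color : Type := Red | Blue.

Definition circ_eq (x y : R) : Prop := exists k : Z, x = y + IZR k.

Definition periodic (c : R -> color) : Prop := forall x, c (x + 1) = c x.

Definition in_W (W : R -> Prop) (x : R) : Prop :=
  exists w, W w /\ circ_eq x w.

(* c is distinguishing for the O(2)-action: the translation x |-> x + t
   preserves c only when it is the identity (t = 0 in S^1), and no
   reflection x |-> -x + 2t (never the identity on S^1) preserves c. *)
Definition distinguishing (c : R -> color) : Prop :=
  (forall t : R, (forall x, c (x + t) = c x) -> circ_eq t 0) /\
  (forall t : R, ~ (forall x, c (- x + 2 * t) = c x)).

(* A precolouring is represented by a periodic p (its values on W are
   irrelevant, since only agreement off W is required). *)
Definition P (W : R -> Prop) : Prop :=
  forall p : R -> color, periodic p ->
    exists c : R -> color,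
      periodic c /\ (forall x, ~ in_W W x -> c x = p x) /\ distinguishing c.

(* Call the antipodal pair {x, x + 1/2} of a colouring c balanced when both points
   have the same colour.  Symmetries of c permute the pairs and preserve their labels
   (balanced of a given colour, or unbalanced).  If the unbalanced pairs of c all lie in
   one class y + Z/2, then a translation preserving c is in Z/2, hence trivial (a half
   turn would balance the pair of y), and every reflection x |-> 2r - x of c satisfies
   2r = 2y mod 1/2.  The free points W form the two antipodal pairs of 0 and of a.  Take
   two colourings that differ exactly on one of these pairs, and suppose each has a
   reflection.  Either the two reflections coincide, which forces the flipped pair onto
   their axis, or they differ by a half turn, which forces a pair to be balanced; both
   contradict the genericity 4a <> 0 mod 1.  Splitting according to the unbalanced pairs
   of the precolouring (none, one class, or two classes, where translations of the pair
   labels are also excluded) gives a distinguishing extension in each case. *)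

From Stdlib Require Import Reals Lra Lia ZArith Classical ClassicalEpsilon.
Open Scope R_scope.

Definition half_int (t : R) : Prop := exists k : Z, t = IZR k / 2.

Lemma half_int_add s t : half_int s -> half_int t -> half_int (s + t).
Proof. intros [k ->] [m ->]. exists (k + m)%Z. rewrite plus_IZR. field. Qed.

Lemma half_int_opp t : half_int t -> half_int (- t).
Proof. intros [k ->]. exists (- k)%Z. rewrite opp_IZR. field. Qed.

Lemma half_int_sub s t : half_int s -> half_int t -> half_int (s - t).
Proof. intros [k ->] [m ->]. exists (k - m)%Z. rewrite minus_IZR. field. Qed.

Lemma half_int_double t : half_int t -> half_int (2 * t).
Proof. intros [k ->]. exists (2 * k)%Z. rewrite mult_IZR. field. Qed.

Lemma half_int_half : half_int (1/2).
Proof. exists 1%Z. reflexivity. Qed.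

Lemma half_int_0 : half_int 0.
Proof. exists 0%Z. field. Qed.

Lemma half_int_one : half_int 1.
Proof. exists 2%Z. field. Qed.

Lemma not_half_int_antipode x f : ~ half_int (x - f) -> ~ half_int (x + 1/2 - f).
Proof.
  intros N H. apply N. replace (x - f) with (x + 1/2 - f - 1/2) by ring.
  now apply half_int_sub; [|exact half_int_half].
Qed.

Lemma half_int_cases t : half_int t -> circ_eq t 0 \/ circ_eq t (1/2).
Proof.
  intros [k ->]. destruct (Z.Even_or_Odd k) as [[m ->]|[m ->]]; [left|right];
    exists m; rewrite ?plus_IZR, mult_IZR; field.
Qed.

Lemma half_int_sub_cases x f : half_int (x - f) -> circ_eq x f \/ circ_eq x (f + 1/2).
Proof. intros H. destruct (half_int_cases _ H) as [[k Hk]|[k Hk]]; [left|right]; exists k; lra. Qed.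

Lemma circ_eq_refl x : circ_eq x x.
Proof. exists 0%Z. lra. Qed.

Lemma circ_eq_half_int x y : circ_eq x y -> half_int (x - y).
Proof. intros [k ->]. exists (2 * k)%Z. rewrite mult_IZR. field. Qed.

Lemma circ_eq_antipode_half_int x y : circ_eq x (y + 1/2) -> half_int (x - y).
Proof. intros [k ->]. exists (2 * k + 1)%Z. rewrite plus_IZR, mult_IZR. field. Qed.

Lemma circ_eq_antipode x y : circ_eq x y -> circ_eq (x + 1/2) (y + 1/2).
Proof. intros [k ->]. exists k. ring. Qed.

Lemma circ_eq_antipode_back x y : circ_eq x (y + 1/2) -> circ_eq (x + 1/2) y.
Proof. intros [k ->]. exists (k + 1)%Z. rewrite plus_IZR. lra. Qed.

Lemma circ_eq_antipode_neq x y : circ_eq x (y + 1/2) -> ~ circ_eq x y.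
Proof.
  intros [k Hk] [m Hm].
  assert (H : IZR (2 * (m - k)) = IZR 1) by (rewrite mult_IZR, minus_IZR; lra).
  apply eq_IZR in H. lia.
Qed.

Definition translation_invariant {A : Type} (g : R -> A) (t : R) : Prop :=
  forall x, g (x + t) = g x.

Definition reflection_invariant {A : Type} (g : R -> A) (r : R) : Prop :=
  forall x, g (- x + 2 * r) = g x.

Lemma reflection_invariant_compose {A : Type} (g : R -> A) r s :
  reflection_invariant g r -> reflection_invariant g s -> translation_invariant g (2 * r - 2 * s).
Proof.
  intros Hr Hs x. replace (x + (2 * r - 2 * s)) with (- (- x + 2 * s) + 2 * r) by ring.
  now rewrite Hr, Hs.
Qed.

Lemma not_distinguishing c : ~ distinguishing c ->
  (exists t, translation_invariant c t /\ ~ circ_eq t 0) \/ (exists r, reflection_invariant c r).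
Proof.
  intros ND. destruct (classic (exists r, reflection_invariant c r)) as [H|H]; [now right|left].
  apply NNPP. intros N. apply ND. split.
  - intros t Ht. apply NNPP. intros Nt. apply N. now exists t.
  - intros r Hr. apply H. now exists r.
Qed.

Lemma color_eq_dec (u v : color) : {u = v} + {u <> v}.
Proof. decide equality. Defined.

Definition pair_label (c : R -> color) (x : R) : option color :=
  if color_eq_dec (c x) (c (x + 1/2)) then Some (c x) else None.

Section Colouring.

Variable c : R -> color.
Hypothesis c_periodic : periodic c.

Lemma periodic_shift_int (m : Z) x : c (x + IZR m) = c x.
Proof.
  revert x. induction m as [|m IHm|m IHm] using Z.peano_ind; intros x.
  - now rewrite Rplus_0_r.
  - rewrite succ_IZR. replace (x + (IZR m + 1)) with (x + IZR m + 1) by ring.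
    now rewrite c_periodic.
  - rewrite <- Z.sub_1_r, minus_IZR.
    replace (x + (IZR m - 1)) with (x - 1 + IZR m) by ring.
    rewrite IHm, <- c_periodic. f_equal. ring.
Qed.

Lemma periodic_circ_eq x y : circ_eq x y -> c x = c y.
Proof. intros [k ->]. apply periodic_shift_int. Qed.

Lemma pair_label_translation t :
  translation_invariant c t -> translation_invariant (pair_label c) t.
Proof.
  intros Ht x. unfold pair_label.
  replace (x + t + 1/2) with (x + 1/2 + t) by ring. now rewrite !Ht.
Qed.

Lemma pair_label_reflection r :
  reflection_invariant c r -> reflection_invariant (pair_label c) r.
Proof.
  intros Hr x. unfold pair_label.
  assert (E : c (- x + 2 * r + 1/2) = c (x + 1/2)).
  { rewrite <- (Hr (x + 1/2)). apply periodic_circ_eq. exists 1%Z. lra. }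
  now rewrite E, Hr.
Qed.

Lemma pair_label_antipode x : pair_label c (x + 1/2) = pair_label c x.
Proof.
  unfold pair_label. replace (x + 1/2 + 1/2) with (x + 1) by field. rewrite c_periodic.
  destruct (color_eq_dec (c (x + 1/2)) (c x)), (color_eq_dec (c x) (c (x + 1/2))); congruence.
Qed.

Lemma pair_label_half_int t x : half_int t -> pair_label c (x + t) = pair_label c x.
Proof.
  intros Ht. destruct (half_int_cases t Ht) as [[k Hk]|[k Hk]].
  - unfold pair_label. replace (x + t + 1/2) with (x + 1/2 + IZR k) by lra.
    replace (x + t) with (x + IZR k) by lra. now rewrite !periodic_shift_int.
  - rewrite <- (pair_label_antipode x). unfold pair_label.
    replace (x + t + 1/2) with (x + 1/2 + 1/2 + IZR k) by lra.
    replace (x + t) with (x + 1/2 + IZR k) by lra. now rewrite !periodic_shift_int.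
Qed.

Lemma unbalanced_translation t y : translation_invariant c t ->
  c y <> c (y + 1/2) -> c (y + t) <> c (y + t + 1/2).
Proof. intros Ht Hy. replace (y + t + 1/2) with (y + 1/2 + t) by ring. now rewrite !Ht. Qed.

Lemma unbalanced_reflection r y : reflection_invariant c r ->
  c y <> c (y + 1/2) -> c (- y + 2 * r) <> c (- y + 2 * r + 1/2).
Proof.
  intros Hr Hy. rewrite Hr, (periodic_circ_eq (- y + 2 * r + 1/2) (- (y + 1/2) + 2 * r)), Hr; [exact Hy|].
  exists 1%Z. lra.
Qed.

Lemma half_int_translation_trivial t y : c y <> c (y + 1/2) ->
  translation_invariant c t -> half_int t -> circ_eq t 0.
Proof.
  intros Hy Ht H. destruct (half_int_cases t H) as [E|[k Hk]]; [exact E|].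
  exfalso. apply Hy. rewrite <- (Ht y). apply periodic_circ_eq. exists k. lra.
Qed.

Lemma reflection_of_unbalanced_class y : c y <> c (y + 1/2) ->
  (forall x, c x <> c (x + 1/2) -> half_int (x - y)) ->
  ~ distinguishing c -> exists r, reflection_invariant c r /\ half_int (2 * r - 2 * y).
Proof.
  intros Hy Hclass ND. destruct (not_distinguishing c ND) as [[t [Ht Hnt]]|[r Hr]].
  - exfalso. apply Hnt, (half_int_translation_trivial t y Hy Ht).
    replace t with (y + t - y) by ring. now apply Hclass, unbalanced_translation.
  - exists r. split; [exact Hr|].
    replace (2 * r - 2 * y) with (- y + 2 * r - y) by ring.
    now apply Hclass, unbalanced_reflection.
Qed.

Lemma reflection_of_rigid_labels y : c y <> c (y + 1/2) ->
  (forall t, translation_invariant (pair_label c) t -> half_int t) ->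
  ~ distinguishing c -> exists r, reflection_invariant c r.
Proof.
  intros Hy Hrigid ND. destruct (not_distinguishing c ND) as [[t [Ht Hnt]]|H]; [|exact H].
  exfalso. apply Hnt, (half_int_translation_trivial t y Hy Ht), Hrigid.
  now apply pair_label_translation.
Qed.

Lemma pair_label_swap (c' : R -> color) f x :
  (forall x, half_int (x - f) -> c' x = c (x + 1/2)) ->
  (forall x, ~ half_int (x - f) -> c' x = c x) ->
  pair_label c' x = pair_label c x.
Proof.
  intros Hon Hoff. unfold pair_label. destruct (classic (half_int (x - f))) as [H|H].
  - rewrite (Hon x H), (Hon (x + 1/2)).
    + replace (x + 1/2 + 1/2) with (x + 1) by field. rewrite c_periodic.
      destruct (color_eq_dec (c (x + 1/2)) (c x)), (color_eq_dec (c x) (c (x + 1/2)));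
        congruence.
    + replace (x + 1/2 - f) with (x - f + 1/2) by ring.
      now apply half_int_add; [|exact half_int_half].
  - rewrite (Hoff x H), (Hoff (x + 1/2)); [reflexivity|]. now apply not_half_int_antipode.
Qed.

End Colouring.

Section PairFlip.

Variables (c c' : R -> color) (f : R).
Hypotheses (c_periodic : periodic c) (c'_periodic : periodic c').
Hypothesis agree_off : forall x, ~ half_int (x - f) -> c x = c' x.

Lemma flip_unbalanced y : ~ half_int (y - f) -> c y <> c (y + 1/2) -> c' y <> c' (y + 1/2).
Proof.
  intros Hyf Hy. rewrite <- (agree_off y Hyf), <- (agree_off (y + 1/2)); [exact Hy|].
  now apply not_half_int_antipode.
Qed.

Lemma common_reflection_axis r s : c f <> c' f ->
  reflection_invariant c r -> reflection_invariant c' s ->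
  circ_eq (2 * r) (2 * s) -> half_int (2 * r - 2 * f).
Proof.
  intros Hf Hr Hs [k Hk]. apply NNPP. intros N. apply Hf.
  rewrite <- (Hr f), agree_off, <- (Hs f).
  - apply periodic_circ_eq; [exact c'_periodic|]. exists k. lra.
  - now replace (- f + 2 * r - f) with (2 * r - 2 * f) by ring.
Qed.

(* The two reflections compose to the half turn x |-> x + 1/2. *)
Lemma reflections_half_turn_apart r s x :
  reflection_invariant c r -> reflection_invariant c' s -> circ_eq (2 * r) (2 * s + 1/2) ->
  ~ half_int (x - f) -> ~ half_int (- x + 2 * s - f) -> c (x + 1/2) = c x.
Proof.
  intros Hr Hs [k Hk] Hx Hx'.
  rewrite <- (Hr (x + 1/2)), (periodic_circ_eq c c_periodic _ (- x + 2 * s)).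
  - now rewrite agree_off, Hs, <- agree_off.
  - exists k. lra.
Qed.

Lemma flip_reflections r s y : c f <> c' f ->
  reflection_invariant c r -> reflection_invariant c' s -> half_int (2 * r - 2 * s) ->
  ~ half_int (y - f) -> c y <> c (y + 1/2) ->
  half_int (2 * r - 2 * f) \/ half_int (- y + 2 * s - f).
Proof.
  intros Hf Hr Hs Hrs Hyf Hy. destruct (half_int_sub_cases _ _ Hrs) as [E|E].
  - left. exact (common_reflection_axis r s Hf Hr Hs E).
  - right. apply NNPP. intros N. apply Hy. symmetry.
    exact (reflections_half_turn_apart r s y Hr Hs E Hyf N).
Qed.

Lemma label_translations_exclusive t u : pair_label c f <> pair_label c' f ->
  translation_invariant (pair_label c) t -> ~ half_int t ->
  translation_invariant (pair_label c') u -> ~ half_int u -> False.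
Proof.
  intros Hf Ht Hnt Hu Hnu.
  assert (Hlab : forall x, ~ half_int (x - f) -> pair_label c x = pair_label c' x).
  { intros x Hx. unfold pair_label.
    rewrite (agree_off x Hx), (agree_off (x + 1/2)); [reflexivity|].
    now apply not_half_int_antipode. }
  apply Hf. transitivity (pair_label c (f - u)).
  - destruct (classic (half_int (t - u))) as [H|H].
    + replace (f - u) with (f - t + (t - u)) by ring.
      rewrite pair_label_half_int by assumption.
      rewrite <- (Ht (f - t)). f_equal. ring.
    + assert (Ht' : ~ half_int (f + t - f)) by now replace (f + t - f) with t by ring.
      assert (Hu' : ~ half_int (f - u + t - f)) by now replace (f - u + t - f) with (t - u) by ring.
      rewrite <- (Ht f), <- (Ht (f - u)), (Hlab _ Ht'), (Hlab _ Hu'), <- (Hu (f - u + t)).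
      f_equal. ring.
  - assert (Hu' : ~ half_int (f - u - f)).
    { intros H. apply Hnu. replace u with (- (f - u - f)) by ring. now apply half_int_opp. }
    rewrite (Hlab _ Hu'), <- (Hu (f - u)). f_equal. ring.
Qed.

Lemma flip_distinguishing_of_unbalanced_class y : c f <> c' f ->
  ~ half_int (y - f) -> ~ half_int (2 * y - 2 * f) -> c y <> c (y + 1/2) ->
  (forall x, c x <> c (x + 1/2) -> half_int (x - y)) ->
  (forall x, c' x <> c' (x + 1/2) -> half_int (x - y)) ->
  distinguishing c \/ distinguishing c'.
Proof.
  intros Hf Hyf Hyf2 Hy Hclass Hclass'.
  destruct (classic (distinguishing c)) as [D|ND]; [now left|].
  destruct (classic (distinguishing c')) as [D'|ND']; [now right|].
  exfalso.
  destruct (reflection_of_unbalanced_class c c_periodic y Hy Hclass ND) as [r [Hr Hry]].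
  destruct (reflection_of_unbalanced_class c' c'_periodic y (flip_unbalanced y Hyf Hy)
              Hclass' ND') as [s [Hs Hsy]].
  assert (Hrs : half_int (2 * r - 2 * s)).
  { replace (2 * r - 2 * s) with ((2 * r - 2 * y) - (2 * s - 2 * y)) by ring.
    now apply half_int_sub. }
  destruct (flip_reflections r s y Hf Hr Hs Hrs Hyf Hy) as [H|H].
  - apply Hyf2. replace (2 * y - 2 * f) with ((2 * r - 2 * f) - (2 * r - 2 * y)) by ring.
    now apply half_int_sub.
  - apply Hyf. replace (y - f) with ((- y + 2 * s - f) - (2 * s - 2 * y)) by ring.
    now apply half_int_sub.
Qed.

Lemma flip_distinguishing_or_reflection y z : c f <> c' f ->
  (forall x, pair_label c x = pair_label c' x) ->
  (forall t, translation_invariant (pair_label c) t -> half_int t) ->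
  ~ half_int (y - f) -> ~ half_int (z - f) -> ~ half_int (y - z) ->
  c y <> c (y + 1/2) -> c z <> c (z + 1/2) ->
  distinguishing c \/ distinguishing c' \/
  exists r, reflection_invariant c r /\ half_int (2 * r - 2 * f).
Proof.
  intros Hf Hlab Hrigid Hyf Hzf Hyz Hy Hz.
  destruct (classic (distinguishing c)) as [D|ND]; [now left|].
  destruct (classic (distinguishing c')) as [D'|ND']; [now right; left|].
  right; right.
  assert (Hrigid' : forall t, translation_invariant (pair_label c') t -> half_int t).
  { intros t Ht. apply Hrigid. intros x. rewrite !Hlab. apply Ht. }
  destruct (reflection_of_rigid_labels c c_periodic y Hy Hrigid ND) as [r Hr].
  destruct (reflection_of_rigid_labels c' c'_periodic y (flip_unbalanced y Hyf Hy)
              Hrigid' ND') as [s Hs].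
  assert (Hrs : half_int (2 * r - 2 * s)).
  { apply Hrigid, reflection_invariant_compose.
    - now apply pair_label_reflection.
    - intros x. rewrite !Hlab. exact (pair_label_reflection c' c'_periodic s Hs x). }
  exists r. split; [exact Hr|].
  destruct (flip_reflections r s y Hf Hr Hs Hrs Hyf Hy) as [H|Hy2]; [exact H|].
  destruct (flip_reflections r s z Hf Hr Hs Hrs Hzf Hz) as [H|Hz2]; [exact H|].
  exfalso. apply Hyz. replace (y - z) with ((- z + 2 * s - f) - (- y + 2 * s - f)) by ring.
  now apply half_int_sub.
Qed.

End PairFlip.

Section PairRecolouring.

Variable f : R.

Definition recolor_pair (v0 v1 : color) (c : R -> color) (x : R) : color :=
  if excluded_middle_informative (half_int (x - f)) then
    if excluded_middle_informative (circ_eq x f) then v0 else v1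
  else c x.

Lemma recolor_pair_at v0 v1 c x : circ_eq x f -> recolor_pair v0 v1 c x = v0.
Proof.
  intros Hx. unfold recolor_pair.
  destruct (excluded_middle_informative (half_int (x - f))) as [_|N].
  - destruct (excluded_middle_informative (circ_eq x f)); [reflexivity|contradiction].
  - exfalso. exact (N (circ_eq_half_int x f Hx)).
Qed.

Lemma recolor_pair_at_antipode v0 v1 c x : circ_eq x (f + 1/2) -> recolor_pair v0 v1 c x = v1.
Proof.
  intros Hx. unfold recolor_pair.
  destruct (excluded_middle_informative (half_int (x - f))) as [_|N].
  - destruct (excluded_middle_informative (circ_eq x f)) as [E|_]; [|reflexivity].
    exfalso. exact (circ_eq_antipode_neq x f Hx E).
  - exfalso. exact (N (circ_eq_antipode_half_int x f Hx)).
Qed.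

Lemma recolor_pair_agree v0 v1 c c' x :
  (~ half_int (x - f) -> c x = c' x) -> recolor_pair v0 v1 c x = recolor_pair v0 v1 c' x.
Proof.
  intros H. unfold recolor_pair.
  destruct (excluded_middle_informative (half_int (x - f))); auto.
Qed.

Lemma recolor_pair_off v0 v1 c x : ~ half_int (x - f) -> recolor_pair v0 v1 c x = c x.
Proof.
  intros H. unfold recolor_pair.
  destruct (excluded_middle_informative (half_int (x - f))); [contradiction|reflexivity].
Qed.

Lemma recolor_pair_periodic v0 v1 c : periodic c -> periodic (recolor_pair v0 v1 c).
Proof.
  intros Hc x. unfold recolor_pair.
  assert (E1 : half_int (x + 1 - f) <-> half_int (x - f)).
  { split; intros H.
    - replace (x - f) with (x + 1 - f - 1) by ring. now apply half_int_sub; [|exact half_int_one].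
    - replace (x + 1 - f) with (x - f + 1) by ring. now apply half_int_add; [|exact half_int_one]. }
  assert (E2 : circ_eq (x + 1) f <-> circ_eq x f).
  { split; intros [k Hk]; [exists (k - 1)%Z | exists (k + 1)%Z];
      rewrite ?plus_IZR, ?minus_IZR; lra. }
  destruct (excluded_middle_informative (half_int (x + 1 - f))),
    (excluded_middle_informative (half_int (x - f))),
    (excluded_middle_informative (circ_eq (x + 1) f)),
    (excluded_middle_informative (circ_eq x f));
    first [reflexivity | apply Hc | tauto].
Qed.

Lemma pair_label_recolor_pair_swap v0 v1 c x : periodic c ->
  pair_label (recolor_pair v1 v0 c) x = pair_label (recolor_pair v0 v1 c) x.
Proof.
  intros Hc. apply (pair_label_swap _ (recolor_pair_periodic v0 v1 c Hc) _ f).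
  - intros y Hy. destruct (half_int_sub_cases y f Hy) as [E|E].
    + rewrite (recolor_pair_at v1 v0 c y E), recolor_pair_at_antipode; [reflexivity|].
      now apply circ_eq_antipode.
    + rewrite (recolor_pair_at_antipode v1 v0 c y E), recolor_pair_at; [reflexivity|].
      now apply circ_eq_antipode_back.
  - intros y Hy. now rewrite !recolor_pair_off.
Qed.

Lemma pair_label_recolor_pair v0 v1 c c' x :
  (forall y, pair_label c y = pair_label c' y) ->
  pair_label (recolor_pair v0 v1 c) x = pair_label (recolor_pair v0 v1 c') x.
Proof.
  intros Hlab. unfold pair_label. destruct (classic (half_int (x - f))) as [H|H].
  - assert (H' : half_int (x + 1/2 - f)).
    { replace (x + 1/2 - f) with (x - f + 1/2) by ring.
      now apply half_int_add; [|exact half_int_half]. }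
    rewrite (recolor_pair_agree v0 v1 c c' x), (recolor_pair_agree v0 v1 c c' (x + 1/2));
      [reflexivity | intros N; contradiction ..].
  - pose proof (not_half_int_antipode x f H) as H'.
    rewrite (recolor_pair_off v0 v1 c x H), (recolor_pair_off v0 v1 c' x H),
      (recolor_pair_off v0 v1 c _ H'), (recolor_pair_off v0 v1 c' _ H').
    exact (Hlab x).
Qed.

Lemma recolor_pair_unbalanced v0 v1 c x :
  recolor_pair v0 v1 c x <> recolor_pair v0 v1 c (x + 1/2) ->
  (half_int (x - f) /\ v0 <> v1) \/ (~ half_int (x - f) /\ c x <> c (x + 1/2)).
Proof.
  intros Hx. destruct (classic (half_int (x - f))) as [H|H].
  - left. split; [exact H|]. destruct (half_int_sub_cases x f H) as [E|E].
    + rewrite (recolor_pair_at v0 v1 c x E), recolor_pair_at_antipode in Hx; [exact Hx|].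
      now apply circ_eq_antipode.
    + rewrite (recolor_pair_at_antipode v0 v1 c x E), recolor_pair_at in Hx;
        [now apply not_eq_sym|].
      now apply circ_eq_antipode_back.
  - right. split; [exact H|].
    rewrite (recolor_pair_off v0 v1 c x H), (recolor_pair_off v0 v1 c (x + 1/2)) in Hx;
      [exact Hx|].
    now apply not_half_int_antipode.
Qed.

End PairRecolouring.

Section Recolouring.

Variables (p : R -> color) (a : R).
Hypothesis p_periodic : periodic p.
Hypothesis a_generic : ~ half_int (2 * a).

Definition recolor (u0 u1 u2 u3 : color) : R -> color :=
  recolor_pair 0 u0 u1 (recolor_pair a u2 u3 p).

Lemma recolor_periodic u0 u1 u2 u3 : periodic (recolor u0 u1 u2 u3).
Proof. now apply recolor_pair_periodic, recolor_pair_periodic. Qed.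

Lemma recolor_off u0 u1 u2 u3 x : ~ half_int (x - 0) -> ~ half_int (x - a) ->
  recolor u0 u1 u2 u3 x = p x.
Proof. intros H0 Ha. unfold recolor. now rewrite !recolor_pair_off. Qed.

Lemma recolor_extends u0 u1 u2 u3 x :
  ~ in_W (fun w => w = 0 \/ w = a \/ w = 1/2 \/ w = a + 1/2) x -> recolor u0 u1 u2 u3 x = p x.
Proof.
  intros Hx. apply recolor_off; intros H; apply Hx.
  - destruct (half_int_sub_cases x 0 H) as [E|E].
    + exists 0. intuition.
    + exists (1/2). rewrite Rplus_0_l in E. intuition.
  - destruct (half_int_sub_cases x a H) as [E|E].
    + exists a. intuition.
    + exists (a + 1/2). intuition.
Qed.

Lemma recolor_at_0 u0 u1 u2 u3 : recolor u0 u1 u2 u3 0 = u0.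
Proof. apply recolor_pair_at, circ_eq_refl. Qed.

Lemma recolor_at_0_antipode u0 u1 u2 u3 : recolor u0 u1 u2 u3 (0 + 1/2) = u1.
Proof. apply recolor_pair_at_antipode, circ_eq_refl. Qed.

Lemma not_half_int_a : ~ half_int (a - 0).
Proof. intros H. apply a_generic. rewrite Rminus_0_r in H. now apply half_int_double. Qed.

Lemma not_half_int_sub_a t : half_int t -> ~ half_int (t - a).
Proof.
  intros Ht H. apply not_half_int_a. replace (a - 0) with (t - (t - a)) by ring.
  now apply half_int_sub.
Qed.

Lemma recolor_at_a u0 u1 u2 u3 : recolor u0 u1 u2 u3 a = u2.
Proof.
  unfold recolor. rewrite recolor_pair_off by exact not_half_int_a.
  apply recolor_pair_at, circ_eq_refl.
Qed.

Lemma recolor_at_a_antipode u0 u1 u2 u3 : recolor u0 u1 u2 u3 (a + 1/2) = u3.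
Proof.
  unfold recolor. rewrite recolor_pair_off by exact (not_half_int_antipode a 0 not_half_int_a).
  apply recolor_pair_at_antipode, circ_eq_refl.
Qed.

Lemma recolor_agree_off_0 u0 u1 v0 v1 u2 u3 x : ~ half_int (x - 0) ->
  recolor u0 u1 u2 u3 x = recolor v0 v1 u2 u3 x.
Proof. intros H. unfold recolor. now rewrite (recolor_pair_off 0 u0 u1), (recolor_pair_off 0 v0 v1). Qed.

Lemma recolor_agree_off_a u0 u1 u2 u3 v2 v3 x : ~ half_int (x - a) ->
  recolor u0 u1 u2 u3 x = recolor u0 u1 v2 v3 x.
Proof. intros H. apply recolor_pair_agree. intros _. now rewrite !recolor_pair_off. Qed.

Lemma pair_label_recolor_swap_0 u0 u1 u2 u3 x :
  pair_label (recolor u0 u1 u2 u3) x = pair_label (recolor u1 u0 u2 u3) x.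
Proof. symmetry. apply pair_label_recolor_pair_swap, recolor_pair_periodic, p_periodic. Qed.

Lemma pair_label_recolor_swap_a u0 u1 u2 u3 x :
  pair_label (recolor u0 u1 u2 u3) x = pair_label (recolor u0 u1 u3 u2) x.
Proof.
  apply pair_label_recolor_pair. intros y. symmetry.
  apply pair_label_recolor_pair_swap, p_periodic.
Qed.

Lemma recolor_unbalanced u0 u1 u2 u3 x :
  recolor u0 u1 u2 u3 x <> recolor u0 u1 u2 u3 (x + 1/2) ->
  (half_int (x - 0) /\ u0 <> u1) \/ (half_int (x - a) /\ u2 <> u3) \/
  (~ half_int (x - 0) /\ ~ half_int (x - a) /\ p x <> p (x + 1/2)).
Proof.
  intros Hx. destruct (recolor_pair_unbalanced _ _ _ _ _ Hx) as [H|[H0 Hx']]; [now left|right].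
  destruct (recolor_pair_unbalanced _ _ _ _ _ Hx') as [H|[Ha Hp]]; [now left|now right].
Qed.

Lemma recolor_unbalanced_off u0 u1 u2 u3 y : ~ half_int (y - 0) -> ~ half_int (y - a) ->
  p y <> p (y + 1/2) -> recolor u0 u1 u2 u3 y <> recolor u0 u1 u2 u3 (y + 1/2).
Proof. intros H0 Ha Hy. rewrite !recolor_off; auto using not_half_int_antipode. Qed.

Lemma distinguishing_recolor_balanced :
  (forall x, ~ half_int (x - 0) -> ~ half_int (x - a) -> p x = p (x + 1/2)) ->
  exists u0 u1 u2 u3, distinguishing (recolor u0 u1 u2 u3).
Proof.
  intros Hbal.
  assert (Hclass : forall v x, recolor Red Blue v v x <> recolor Red Blue v v (x + 1/2) ->
                               half_int (x - 0)).
  { intros v x Hx.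
    destruct (recolor_unbalanced _ _ _ _ _ Hx) as [[H _]|[[_ N]|[H0 [Ha Hp]]]].
    - exact H.
    - now contradiction N.
    - now contradiction (Hbal x H0 Ha). }
  assert (D : distinguishing (recolor Red Blue Red Red) \/
              distinguishing (recolor Red Blue Blue Blue)).
  { apply (flip_distinguishing_of_unbalanced_class _ _ a) with (y := 0);
      try apply recolor_periodic; try apply Hclass.
    - apply recolor_agree_off_a.
    - now rewrite !recolor_at_a.
    - apply not_half_int_sub_a, half_int_0.
    - intros H. apply a_generic. replace (2 * a) with (0 - (2 * 0 - 2 * a)) by ring.
      now apply half_int_sub; [exact half_int_0|].
    - now rewrite recolor_at_0, recolor_at_0_antipode. }
  destruct D as [D|D]; do 4 eexists; exact D.
Qed.

Lemma distinguishing_recolor_one_class y :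
  ~ half_int (y - 0) -> ~ half_int (y - a) -> p y <> p (y + 1/2) ->
  (forall x, ~ half_int (x - 0) -> ~ half_int (x - a) -> p x <> p (x + 1/2) ->
             half_int (x - y)) ->
  exists u0 u1 u2 u3, distinguishing (recolor u0 u1 u2 u3).
Proof.
  intros Hy0 Hya Hy Hclass.
  assert (Hclass' : forall u v x, recolor u u v v x <> recolor u u v v (x + 1/2) ->
                                  half_int (x - y)).
  { intros u v x Hx.
    destruct (recolor_unbalanced _ _ _ _ _ Hx) as [[_ N]|[[_ N]|[H0 [Ha Hp]]]].
    - now contradiction N.
    - now contradiction N.
    - now apply Hclass. }
  destruct (classic (half_int (2 * y - 2 * a))) as [Hya2|Hya2].
  - assert (D : distinguishing (recolor Red Red Red Red) \/
                distinguishing (recolor Blue Blue Red Red)).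
    { apply (flip_distinguishing_of_unbalanced_class _ _ 0) with (y := y);
        try apply recolor_periodic; try apply Hclass'; try assumption.
      - apply recolor_agree_off_0.
      - now rewrite !recolor_at_0.
      - intros H. apply a_generic.
        replace (2 * a) with ((2 * y - 2 * 0) - (2 * y - 2 * a)) by ring.
        now apply half_int_sub.
      - now apply recolor_unbalanced_off. }
    destruct D as [D|D]; do 4 eexists; exact D.
  - assert (D : distinguishing (recolor Red Red Red Red) \/
                distinguishing (recolor Red Red Blue Blue)).
    { apply (flip_distinguishing_of_unbalanced_class _ _ a) with (y := y);
        try apply recolor_periodic; try apply Hclass'; try assumption.
      - apply recolor_agree_off_a.
      - now rewrite !recolor_at_a.
      - now apply recolor_unbalanced_off. }
    destruct D as [D|D]; do 4 eexists; exact D.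
Qed.

Lemma recolor_rigid_labels_of_label_translation t :
  translation_invariant (pair_label (recolor Red Blue Red Blue)) t -> ~ half_int t ->
  forall v u, translation_invariant (pair_label (recolor Red Blue v v)) u -> half_int u.
Proof.
  intros Ht Hnt v u Hu. apply NNPP. intros Hnu.
  apply (label_translations_exclusive (recolor Red Blue Red Blue) (recolor Red Blue v v) a)
    with (t := t) (u := u); try assumption.
  - apply recolor_periodic.
  - apply recolor_agree_off_a.
  - unfold pair_label. rewrite !recolor_at_a, !recolor_at_a_antipode.
    destruct v; discriminate.
Qed.

Lemma flip_a_no_reflections_through_0 r s :
  reflection_invariant (recolor Red Blue Red Red) r ->
  reflection_invariant (recolor Red Blue Blue Blue) s ->
  half_int (2 * r - 2 * 0) -> half_int (2 * s - 2 * 0) -> False.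
Proof.
  intros Hr Hs H0r H0s.
  assert (Hrs : half_int (2 * r - 2 * s)).
  { replace (2 * r - 2 * s) with ((2 * r - 2 * 0) - (2 * s - 2 * 0)) by ring.
    now apply half_int_sub. }
  destruct (half_int_sub_cases _ _ Hrs) as [E|E].
  - assert (Hra : half_int (2 * r - 2 * a)).
    { apply (common_reflection_axis (recolor Red Blue Red Red) (recolor Red Blue Blue Blue) a)
        with (s := s); try assumption.
      - apply recolor_periodic.
      - apply recolor_agree_off_a.
      - now rewrite !recolor_at_a. }
    apply a_generic. replace (2 * a) with ((2 * r - 2 * 0) - (2 * r - 2 * a)) by ring.
    now apply half_int_sub.
  - assert (Hbal : recolor Red Blue Red Red (0 + 1/2) = recolor Red Blue Red Red 0).
    { apply (reflections_half_turn_apart (recolor Red Blue Red Red) (recolor Red Blue Blue Blue) a)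
        with (r := r) (s := s); try assumption.
      - apply recolor_periodic.
      - apply recolor_agree_off_a.
      - apply not_half_int_sub_a, half_int_0.
      - apply not_half_int_sub_a. now replace (- 0 + 2 * s) with (2 * s - 2 * 0) by ring. }
    rewrite recolor_at_0, recolor_at_0_antipode in Hbal. discriminate.
Qed.

Section TwoClasses.

Variables y z : R.
Hypotheses (Hy0 : ~ half_int (y - 0)) (Hya : ~ half_int (y - a)) (Hy : p y <> p (y + 1/2)).
Hypotheses (Hz0 : ~ half_int (z - 0)) (Hza : ~ half_int (z - a)) (Hz : p z <> p (z + 1/2)).
Hypothesis Hyz : ~ half_int (y - z).

Lemma flip_0_distinguishing_or_reflection u0 u1 u2 u3 : u0 <> u1 ->
  (forall t, translation_invariant (pair_label (recolor u0 u1 u2 u3)) t -> half_int t) ->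
  distinguishing (recolor u0 u1 u2 u3) \/ distinguishing (recolor u1 u0 u2 u3) \/
  exists r, reflection_invariant (recolor u0 u1 u2 u3) r /\ half_int (2 * r - 2 * 0).
Proof.
  intros Hu Hrigid.
  apply (flip_distinguishing_or_reflection _ _ 0) with (y := y) (z := z);
    try apply recolor_periodic; try apply recolor_unbalanced_off; try assumption.
  - apply recolor_agree_off_0.
  - now rewrite !recolor_at_0.
  - apply pair_label_recolor_swap_0.
Qed.

Lemma flip_a_distinguishing_or_reflection u0 u1 u2 u3 : u2 <> u3 ->
  (forall t, translation_invariant (pair_label (recolor u0 u1 u2 u3)) t -> half_int t) ->
  distinguishing (recolor u0 u1 u2 u3) \/ distinguishing (recolor u0 u1 u3 u2) \/
  exists r, reflection_invariant (recolor u0 u1 u2 u3) r /\ half_int (2 * r - 2 * a).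
Proof.
  intros Hu Hrigid.
  apply (flip_distinguishing_or_reflection _ _ a) with (y := y) (z := z);
    try apply recolor_periodic; try apply recolor_unbalanced_off; try assumption.
  - apply recolor_agree_off_a.
  - now rewrite !recolor_at_a.
  - apply pair_label_recolor_swap_a.
Qed.

Lemma distinguishing_recolor_rigid_labels :
  (forall t, translation_invariant (pair_label (recolor Red Blue Red Blue)) t -> half_int t) ->
  exists u0 u1 u2 u3, distinguishing (recolor u0 u1 u2 u3).
Proof.
  intros Hrigid.
  destruct (flip_0_distinguishing_or_reflection Red Blue Red Blue) as [D|[D|[r0 [Hr0 H0]]]];
    try discriminate; try exact Hrigid; try (do 4 eexists; exact D).
  destruct (flip_a_distinguishing_or_reflection Red Blue Red Blue) as [D|[D|[r1 [Hr1 H1]]]];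
    try discriminate; try exact Hrigid; try (do 4 eexists; exact D).
  exfalso. apply a_generic.
  assert (H01 : half_int (2 * r0 - 2 * r1)).
  { apply Hrigid, reflection_invariant_compose; apply pair_label_reflection;
      auto using recolor_periodic. }
  replace (2 * a) with ((2 * r0 - 2 * 0) - (2 * r0 - 2 * r1) - (2 * r1 - 2 * a)) by ring.
  now apply half_int_sub; [apply half_int_sub|].
Qed.

Lemma distinguishing_recolor_label_translation t :
  translation_invariant (pair_label (recolor Red Blue Red Blue)) t -> ~ half_int t ->
  exists u0 u1 u2 u3, distinguishing (recolor u0 u1 u2 u3).
Proof.
  intros Ht Hnt.
  pose proof (recolor_rigid_labels_of_label_translation t Ht Hnt) as Hrigid.
  destruct (flip_0_distinguishing_or_reflection Red Blue Red Red) as [D|[D|[r [Hr H0r]]]];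
    try discriminate; try apply Hrigid; try (do 4 eexists; exact D).
  destruct (flip_0_distinguishing_or_reflection Red Blue Blue Blue) as [D|[D|[s [Hs H0s]]]];
    try discriminate; try apply Hrigid; try (do 4 eexists; exact D).
  exfalso. exact (flip_a_no_reflections_through_0 r s Hr Hs H0r H0s).
Qed.

Lemma distinguishing_recolor_two_classes :
  exists u0 u1 u2 u3, distinguishing (recolor u0 u1 u2 u3).
Proof.
  destruct (classic (exists t, translation_invariant (pair_label (recolor Red Blue Red Blue)) t
                               /\ ~ half_int t)) as [[t [Ht Hnt]]|N].
  - exact (distinguishing_recolor_label_translation t Ht Hnt).
  - apply distinguishing_recolor_rigid_labels. intros t Ht.
    apply NNPP. intros Hnt. apply N. now exists t.
Qed.

End TwoClasses.

Lemma distinguishing_recolor_exists : exists u0 u1 u2 u3, distinguishing (recolor u0 u1 u2 u3).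
Proof.
  pose (off x := ~ half_int (x - 0) /\ ~ half_int (x - a)).
  destruct (classic (exists y z, off y /\ off z /\ p y <> p (y + 1/2) /\ p z <> p (z + 1/2)
                                 /\ ~ half_int (y - z)))
    as [(y & z & [Hy0 Hya] & [Hz0 Hza] & Hy & Hz & Hyz)|N2].
  - exact (distinguishing_recolor_two_classes y z Hy0 Hya Hy Hz0 Hza Hz Hyz).
  - destruct (classic (exists y, off y /\ p y <> p (y + 1/2))) as [(y & [Hy0 Hya] & Hy)|N1].
    + apply (distinguishing_recolor_one_class y Hy0 Hya Hy). intros x Hx0 Hxa Hx.
      apply NNPP. intros Hxy. apply N2. exists x, y. unfold off. tauto.
    + apply distinguishing_recolor_balanced. intros x Hx0 Hxa.
      apply NNPP. intros Hx. apply N1. exists x. unfold off. tauto.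
Qed.

End Recolouring.

Lemma quarter_points_excluded a :
  ~ circ_eq a 0 -> ~ circ_eq a (1/2) -> ~ circ_eq a (1/4) -> ~ circ_eq a (- (1/4)) ->
  ~ half_int (2 * a).
Proof.
  intros h0 h1 h2 h3 [k Hk].
  pose proof (Z.div_mod k 4 ltac:(lia)) as Hdiv.
  pose proof (Z.mod_pos_bound k 4 ltac:(lia)) as Hbound.
  assert (Ha : a = IZR (k / 4) + IZR (k mod 4) / 4).
  { apply (f_equal IZR) in Hdiv. rewrite plus_IZR, mult_IZR in Hdiv. lra. }
  assert (Hr : (k mod 4 = 0 \/ k mod 4 = 1 \/ k mod 4 = 2 \/ k mod 4 = 3)%Z) by lia.
  destruct Hr as [Hr|[Hr|[Hr|Hr]]]; rewrite Hr in Ha.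
  - apply h0. exists (k / 4)%Z. lra.
  - apply h2. exists (k / 4)%Z. lra.
  - apply h1. exists (k / 4)%Z. lra.
  - apply h3. exists (k / 4 + 1)%Z. rewrite plus_IZR. lra.
Qed.

Theorem lemma2p3p4 (a : R)
  (h0 : ~ circ_eq a 0) (h1 : ~ circ_eq a (1/2))
  (h2 : ~ circ_eq a (1/4)) (h3 : ~ circ_eq a (- (1/4))) :
  P (fun w => w = 0 \/ w = a \/ w = 1/2 \/ w = a + 1/2).
Proof.
  intros p Hp.
  destruct (distinguishing_recolor_exists p a Hp (quarter_points_excluded a h0 h1 h2 h3))
    as (u0 & u1 & u2 & u3 & D).
  exists (recolor p a u0 u1 u2 u3). split; [|split].
  - now apply recolor_periodic.
  - intros x Hx. now apply recolor_extends.
  - exact D.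
Qed.
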